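(* Let $(Z,Z_{ac},e)$ be an accretive archimedean matrix-order unit space. For $z\in M_n(Z)$ define $\nu_e^n(z)=\inf\{t>0: te\otimes I_n-z\in Z_{ac}^n\}$. Then $\nu_e=\{\nu_e^n\}$ is a matrix gauge on $Z$ (so $(Z,\nu_e)$ is a matrix gauge space), and for each $n$, $Z_{ac}^n=\{z\in M_n(Z):\nu_e^n(-z)=0\}$.
   Context: For a complex vector space $Z$, $M_n(Z)$ is the $n\times n$ matrices over $Z$; $e\otimes I_n$ is the diagonal matrix with all diagonal entries $e$. A cone is a set $C$ with $C+C\subseteq C$, $tC\subseteq C$ ($t\ge0$); a matrix cone is a sequence of cones $C_n\subseteq M_n(Z)$ with $X^*C_nX\subseteq C_k$ for scalar $X\in M_{n,k}$; it is $\mathbb{C}$-proper if $C_1\cap-C_1\cap iC_1\cap-iC_1=\{0\}$, making $(Z,Z_{ac})$ an accretive matrix-ordered vector space, with $Z_{sa}^n=iZ_{ac}^n\cap-iZ_{ac}^n$. An element $e\in Z_{sa}^1$ is an accretive matrix-order unit if for each $n$ and $z\in M_n(Z)$ there is $t>0$ with $te\otimes I_n+z\in Z_{ac}^n$; it is archimedean if $te\otimes I_n+z\in Z_{ac}^n$ for all $t>0$ implies $z\in Z_{ac}^n$; then $(Z,Z_{ac},e)$ is an accretive archimedean matrix-order unit space. A matrix gauge is a sequence $\{\nu_n:M_n(Z)\to[0,\infty)\}$ with $\nu_n(x+y)\le\nu_n(x)+\nu_n(y)$, $\nu_n(tx)=t\nu_n(x)$ ($t\ge0$), $\nu_k(X^*AX)\le\|X\|^2\nu_n(A)$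 for scalar $X\in M_{n,k}$, and $\nu_{n+m}(A\oplus B)=\max\{\nu_n(A),\nu_m(B)\}$. *)

From mathcomp Require Import all_boot.
From mathcomp Require Import matrix.
From Stdlib Require Import Reals ClassicalEpsilon.
Set Implicit Arguments. Unset Strict Implicit. Unset Printing Implicit Defensive.
Local Open Scope R_scope.

Record Cplx := Cmk { Cre : R; Cim : R }.
Definition Cadd (a b : Cplx) := Cmk (Cre a + Cre b) (Cim a + Cim b).
Definition Cmul (a b : Cplx) :=
  Cmk (Cre a * Cre b - Cim a * Cim b) (Cre a * Cim b + Cim a * Cre b).
Definition Cconj (a : Cplx) := Cmk (Cre a) (- Cim a).
Definition Cnorm2 (a : Cplx) : R := Cre a * Cre a + Cim a * Cim a.
Definition Creal (t : R) := Cmk t 0.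
Definition C1 := Creal 1.
Definition Ci := Cmk 0 1.
Definition Cm1 := Creal (-1).
Definition Cmi := Cmk 0 (-1).

Record CVS := {
  vcar :> Type;
  vadd : vcar -> vcar -> vcar;
  vzero : vcar;
  vscal : Cplx -> vcar -> vcar;
  vadd_assoc : forall x y z, vadd x (vadd y z) = vadd (vadd x y) z;
  vadd_comm : forall x y, vadd x y = vadd y x;
  vadd_0 : forall x, vadd vzero x = x;
  vadd_opp : forall x, vadd (vscal Cm1 x) x = vzero;
  vscal_1 : forall x, vscal C1 x = x;
  vscal_assoc : forall a b x, vscal a (vscal b x) = vscal (Cmul a b) x;
  vscal_distr_v : forall a x y, vscal a (vadd x y) = vadd (vscal a x) (vscal a y);
  vscal_distr_c : forall a b x, vscal (Cadd a b) x = vadd (vscal a x) (vscal b x)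
}.

Section MatOps.
Variable Z : CVS.

Definition madd n (A B : 'M[Z]_n) : 'M[Z]_n := \matrix_(i, j) vadd (A i j) (B i j).
Definition mscal n (a : Cplx) (A : 'M[Z]_n) : 'M[Z]_n := \matrix_(i, j) vscal a (A i j).
Definition mopp n (A : 'M[Z]_n) : 'M[Z]_n := mscal Cm1 A.
Definition mzero m k : 'M[Z]_(m, k) := const_mx (vzero Z).
Definition eI (e : Z) n : 'M[Z]_n := \matrix_(i, j) if i == j then e else vzero Z.
Definition congr_mx n k (X : 'M[Cplx]_(n, k)) (A : 'M[Z]_n) : 'M[Z]_k :=
  \matrix_(i, j) \big[@vadd Z/vzero Z]_(p < n) \big[@vadd Z/vzero Z]_(q < n)
      vscal (Cmul (Cconj (X p i)) (X q j)) (A p q).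
Definition dsum n m (A : 'M[Z]_n) (B : 'M[Z]_m) : 'M[Z]_(n + m) :=
  block_mx A (mzero n m) (mzero m n) B.
Definition mx1 (z : Z) : 'M[Z]_1 := \matrix_(i, j) z.
End MatOps.

Definition vnorm2 n (v : 'I_n -> Cplx) : R := \big[Rplus/0]_(i < n) Cnorm2 (v i).
Definition mxapply n k (X : 'M[Cplx]_(n, k)) (v : 'I_k -> Cplx) : 'I_n -> Cplx :=
  fun i => \big[Cadd/Creal 0]_(j < k) Cmul (X i j) (v j).
(* c is a bound for X : ||X v|| <= c ||v|| for all v; ||X|| is the least such c >= 0 *)
Definition opnorm_bound n k (X : 'M[Cplx]_(n, k)) (c : R) : Prop :=
  0 <= c /\ forall v, vnorm2 (mxapply X v) <= c * c * vnorm2 v.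

Definition is_lower_bound (E : R -> Prop) (m : R) := forall x, E x -> m <= x.
Definition is_glb (E : R -> Prop) (m : R) :=
  is_lower_bound E m /\ forall b, is_lower_bound E b -> b <= m.
Definition Rinf (E : R -> Prop) : R := epsilon (inhabits 0) (is_glb E).

Definition MatCone (Z : CVS) := forall n, 'M[Z]_n -> Prop.

Definition is_matrix_cone (Z : CVS) (C : MatCone Z) : Prop :=
  (forall n A B, C n A -> C n B -> C n (madd A B)) /\
  (forall n (t : R) A, 0 <= t -> C n A -> C n (mscal (Creal t) A)) /\
  (forall n k (X : 'M[Cplx]_(n, k)) A, C n A -> C k (congr_mx X A)).

Definition C_proper (Z : CVS) (C : MatCone Z) : Prop :=
  forall x : 'M[Z]_1,
    (C 1%nat x /\ C 1%nat (mopp x) /\ C 1%nat (mscal Cmi x) /\ C 1%nat (mscal Ci x))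
    <-> x = mzero Z 1 1.

Definition in_sa (Z : CVS) (C : MatCone Z) n (x : 'M[Z]_n) : Prop :=
  C n (mscal Cmi x) /\ C n (mscal Ci x).

Definition is_order_unit (Z : CVS) (C : MatCone Z) (e : Z) : Prop :=
  in_sa C (mx1 e) /\
  forall n (z : 'M[Z]_n), exists t : R, 0 < t /\ C n (madd (mscal (Creal t) (eI e n)) z).

Definition is_archimedean (Z : CVS) (C : MatCone Z) (e : Z) : Prop :=
  forall n (z : 'M[Z]_n),
    (forall t : R, 0 < t -> C n (madd (mscal (Creal t) (eI e n)) z)) -> C n z.

Definition accretive_AMOU_space (Z : CVS) (C : MatCone Z) (e : Z) : Prop :=
  is_matrix_cone C /\ C_proper C /\ is_order_unit C e /\ is_archimedean C e.

Definition is_matrix_gauge (Z : CVS) (nu : forall n, 'M[Z]_n -> R) : Prop :=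
  (forall n x, 0 <= nu n x) /\
  (forall n x y, nu n (madd x y) <= nu n x + nu n y) /\
  (forall n (t : R) x, 0 <= t -> nu n (mscal (Creal t) x) = t * nu n x) /\
  (forall n k (X : 'M[Cplx]_(n, k)) A c,
      opnorm_bound X c -> nu k (congr_mx X A) <= c * c * nu n A) /\
  (forall n m (A : 'M[Z]_n) (B : 'M[Z]_m), nu (n + m)%nat (dsum A B) = Rmax (nu n A) (nu m B)).

Definition nu_e (Z : CVS) (C : MatCone Z) (e : Z) n (z : 'M[Z]_n) : R :=
  Rinf (fun t => 0 < t /\ C n (madd (mscal (Creal t) (eI e n)) (mopp z))).

(* The set of t > 0 with t e (x) I_n - z in Z_ac^n is an up-set whose infimum
   is nu_e^n(z).  Adding, scaling, compressing and forming direct sums of these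
   memberships inside the matrix cone gives subadditivity, homogeneity and the
   max rule, and the archimedean property gives the description of Z_ac^n.
   For the congruence bound, with c >= ||X||, d > 0 and t e (x) I_n - A in Z_ac^n:
     (t c^2 + d) e (x) I_k - X^* A X
       = X^* (t e (x) I_n - A) X + ((t c^2 + d) I_k - t X^* X) (x) e,
   and the scalar matrix in the last term is positive definite.  P (x) e lies in
   the cone for every positive definite P, by induction on the size: P is the
   rank-one matrix w^* w / P_00 built on its first row w plus (a padding of) its
   Schur complement, and both pieces tensored with e are compressions of cone
   elements. *)

From Pilot Require Import Defs.
From HB Require Import structures.
From mathcomp Require Import all_boot.
From mathcomp Require Import matrix.
From Stdlib Require Import Reals Lra ClassicalEpsilon Classical.
Set Implicit Arguments. Unset Strict Implicit. Unset Printing Implicit Defensive.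
Local Open Scope R_scope.

(** * Infima *)

Lemma Rinf_glb (E : R -> Prop) m :
  (exists x, E x) -> is_lower_bound E m -> is_glb E (Rinf E).
Proof.
move=> [x0 Ex0] Em; rewrite /Rinf; apply: epsilon_spec.
have boundN : bound (fun y => E (- y)) by exists (- m) => y /Em; lra.
have inhN : exists y, E (- y) by exists (- x0); rewrite Ropp_involutive.
case: (completeness _ boundN inhN) => s [ub lub].
exists (- s); split.
- move=> y Ey; have : - y <= s by apply: ub; rewrite Ropp_involutive.
  lra.
- move=> b Eb; have : s <= - b by apply: lub => y /Eb; lra.
  lra.
Qed.

Lemma glb_le E m x : is_glb E m -> E x -> m <= x.
Proof. by case=> lb _; apply: lb. Qed.

Lemma glb_ge E m b : is_glb E m -> is_lower_bound E b -> b <= m.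
Proof. by case=> _; apply. Qed.

Lemma glb_approx E m d : is_glb E m -> 0 < d -> exists x, E x /\ x < m + d.
Proof.
move=> Em d_gt0; apply: NNPP => none.
have : m + d <= m.
  apply: (glb_ge Em) => x Ex; apply: Rnot_lt_le => lt_x; apply: none; by exists x.
lra.
Qed.

Lemma glb_le_add E1 E2 m1 m2 y : is_glb E1 m1 -> is_glb E2 m2 ->
  (forall t s, E1 t -> E2 s -> y <= t + s) -> y <= m1 + m2.
Proof.
move=> Em1 Em2 bound.
have : y - m1 <= m2.
  apply: (glb_ge Em2) => s E2s.
  suff : y - s <= m1 by lra.
  apply: (glb_ge Em1) => t E1t; have := bound _ _ E1t E2s; lra.
lra.
Qed.

Lemma glb_le_mul E m k y : is_glb E m -> 0 <= k ->
  (forall t, E t -> y <= t * k) -> y <= m * k.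
Proof.
move=> Em k_ge0 bound; apply: Rle_plus_epsilon => d d_gt0.
have [t [Et lt_t]] := glb_approx Em (Rdiv_lt_0_compat _ _ d_gt0 (ltac:(lra) : 0 < k + 1)).
have := bound _ Et; set r := d / (k + 1) in lt_t *.
have dE : r * (k + 1) = d by rewrite /r; field; lra.
nra.
Qed.

Lemma glb_le_max E1 E2 m1 m2 y : is_glb E1 m1 -> is_glb E2 m2 ->
  (forall t s, E1 t -> E2 s -> y <= Rmax t s) -> y <= Rmax m1 m2.
Proof.
move=> Em1 Em2 bound; apply: Rle_plus_epsilon => d d_gt0.
have [t [E1t lt_t]] := glb_approx Em1 d_gt0.
have [s [E2s lt_s]] := glb_approx Em2 d_gt0.
have := bound _ _ E1t E2s; have := Rmax_l m1 m2; have := Rmax_r m1 m2.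
have := Rmax_lub_lt t s (Rmax m1 m2 + d); lra.
Qed.

(** * Scalar matrices and the Schur complement *)

Lemma Cext a b : Cre a = Cre b -> Cim a = Cim b -> a = b.
Proof. by case: a b => [? ?] [? ?] /= -> ->. Qed.

Ltac cring := apply: Cext => /=; ring.

Lemma CaddA : associative Cadd. Proof. move=> ???; cring. Qed.
Lemma CaddC : commutative Cadd. Proof. move=> ??; cring. Qed.
Lemma Cadd0 : left_id (Creal 0) Cadd. Proof. move=> [??]; cring. Qed.
HB.instance Definition _ := Monoid.isComLaw.Build Cplx (Creal 0) Cadd CaddA CaddC Cadd0.

Lemma RplusA : associative Rplus. Proof. move=> ???; ring. Qed.
Lemma RplusC : commutative Rplus. Proof. move=> ??; ring. Qed.
Lemma Rplus0 : left_id 0 Rplus. Proof. move=> ?; ring. Qed.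
HB.instance Definition _ := Monoid.isComLaw.Build R 0 Rplus RplusA RplusC Rplus0.

Lemma Cmul_sumr I (r : seq I) (P : pred I) F c :
  Cmul c (\big[Cadd/Creal 0]_(i <- r | P i) F i) =
  \big[Cadd/Creal 0]_(i <- r | P i) Cmul c (F i).
Proof. apply: (big_morph (Cmul c)) => [x y|]; cring. Qed.

Lemma Cmul_suml I (r : seq I) (P : pred I) F c :
  Cmul (\big[Cadd/Creal 0]_(i <- r | P i) F i) c =
  \big[Cadd/Creal 0]_(i <- r | P i) Cmul (F i) c.
Proof. apply: (big_morph (Cmul^~ c)) => [x y|]; cring. Qed.

Lemma Cconj_sum I (r : seq I) (P : pred I) F :
  Cconj (\big[Cadd/Creal 0]_(i <- r | P i) F i) =
  \big[Cadd/Creal 0]_(i <- r | P i) Cconj (F i).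
Proof. apply: (big_morph Cconj) => [x y|]; cring. Qed.

Lemma Cre_sum I (r : seq I) (P : pred I) F :
  Cre (\big[Cadd/Creal 0]_(i <- r | P i) F i) = \big[Rplus/0]_(i <- r | P i) Cre (F i).
Proof. by apply: (big_morph Cre). Qed.

Lemma Csum_delta n (i0 : 'I_n) (F : 'I_n -> Cplx) :
  (forall i, i != i0 -> F i = Creal 0) -> \big[Cadd/Creal 0]_(i < n) F i = F i0.
Proof. by move=> F0; rewrite (bigD1 i0) //= big1 ?Monoid.mulm1. Qed.
Arguments Csum_delta [n] i0 [F].

Lemma Cnorm2_ge0 a : 0 <= Cnorm2 a.
Proof. rewrite /Cnorm2; nra. Qed.

Lemma vnorm2_ge0 n (v : 'I_n -> Cplx) : 0 <= vnorm2 v.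
Proof.
apply: (big_ind (fun x => 0 <= x)) => [|x y|i _]; [lra | lra | exact: Cnorm2_ge0].
Qed.

Definition cdelta (b : bool) : Cplx := if b then Defs.C1 else Creal 0.

Definition cidmx n : 'M[Cplx]_n := \matrix_(i, j) cdelta (i == j).

Definition ccongr n k (X : 'M[Cplx]_(n, k)) (P : 'M[Cplx]_n) : 'M[Cplx]_k :=
  \matrix_(i, j) \big[Cadd/Creal 0]_(p < n) \big[Cadd/Creal 0]_(q < n)
      Cmul (Cmul (Cconj (X p i)) (X q j)) (P p q).

Definition gram n k (X : 'M[Cplx]_(n, k)) : 'M[Cplx]_k :=
  \matrix_(i, j) \big[Cadd/Creal 0]_(p < n) Cmul (Cconj (X p i)) (X p j).

Definition clincomb n (a : R) (P : 'M[Cplx]_n) (b : R) (Q : 'M[Cplx]_n) : 'M[Cplx]_n :=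
  \matrix_(i, j) Cadd (Cmul (Creal a) (P i j)) (Cmul (Creal b) (Q i j)).

Definition qform n (P : 'M[Cplx]_n) (v : 'I_n -> Cplx) : Cplx :=
  \big[Cadd/Creal 0]_(i < n) \big[Cadd/Creal 0]_(j < n) Cmul (Cmul (Cconj (v i)) (P i j)) (v j).

Definition hermitian n (P : 'M[Cplx]_n) := forall i j, P j i = Cconj (P i j).

Definition posdef n (P : 'M[Cplx]_n) (d : R) := forall v, d * vnorm2 v <= Cre (qform P v).

Lemma ccongr_cidmx n k (X : 'M[Cplx]_(n, k)) : ccongr X (cidmx n) = gram X.
Proof.
apply/matrixP => i j; rewrite !mxE; apply: eq_bigr => p _.
rewrite (Csum_delta p) => [|q Hq]; rewrite mxE ?eqxx; first cring.
by rewrite eq_sym (negbTE Hq); cring.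
Qed.

Lemma qform_clincomb n a (P : 'M[Cplx]_n) b Q v :
  qform (clincomb a P b Q) v = Cadd (Cmul (Creal a) (qform P v)) (Cmul (Creal b) (qform Q v)).
Proof.
rewrite /qform !Cmul_sumr -big_split; apply: eq_bigr => i _.
rewrite !Cmul_sumr -big_split; apply: eq_bigr => j _; rewrite mxE; cring.
Qed.

Lemma qform_cidmx n v : Cre (qform (cidmx n) v) = vnorm2 v.
Proof.
rewrite /qform Cre_sum; apply: eq_bigr => i _.
rewrite (Csum_delta i) => [|j Hj]; rewrite mxE ?eqxx /=; first by rewrite /Cnorm2; ring.
by rewrite eq_sym (negbTE Hj); cring.
Qed.

Lemma qform_gram n k (X : 'M[Cplx]_(n, k)) v : Cre (qform (gram X) v) = vnorm2 (mxapply X v).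
Proof.
have -> : qform (gram X) v =
    \big[Cadd/Creal 0]_(p < n) Cmul (Cconj (mxapply X v p)) (mxapply X v p).
  rewrite /qform /mxapply.
  under eq_bigr => i _ do (under eq_bigr => j _ do rewrite mxE Cmul_sumr Cmul_suml;
                           rewrite exchange_big).
  rewrite exchange_big; apply: eq_bigr => p _.
  rewrite Cconj_sum Cmul_suml; apply: eq_bigr => i _.
  rewrite Cmul_sumr; apply: eq_bigr => j _; cring.
rewrite Cre_sum; apply: eq_bigr => p _ /=; rewrite /Cnorm2; ring.
Qed.

Lemma hermitian_cidmx n : hermitian (cidmx n).
Proof. move=> i j; rewrite !mxE eq_sym; case: (_ == _); cring. Qed.

Lemma hermitian_gram n k (X : 'M[Cplx]_(n, k)) : hermitian (gram X).
Proof. move=> i j; rewrite !mxE Cconj_sum; apply: eq_bigr => p _; cring. Qed.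

Lemma hermitian_clincomb n a (P : 'M[Cplx]_n) b Q :
  hermitian P -> hermitian Q -> hermitian (clincomb a P b Q).
Proof. move=> hP hQ i j; rewrite !mxE hP hQ; cring. Qed.

Lemma posdef_bound_sub_gram n k (X : 'M[Cplx]_(n, k)) c t d :
  opnorm_bound X c -> 0 <= t -> posdef (clincomb (t * (c * c) + d) (cidmx k) (- t) (gram X)) d.
Proof.
move=> [_ hX] ht v; rewrite qform_clincomb /= qform_cidmx qform_gram.
have := Rmult_le_compat_l t _ _ ht (hX v); have := vnorm2_ge0 v; nra.
Qed.

Section SchurComplement.
Variables (k : nat) (P : 'M[Cplx]_k.+1).
Hypothesis hP : hermitian P.

Definition pivot := Cre (P ord0 ord0).

Lemma pivotE : P ord0 ord0 = Creal pivot.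
Proof.
apply: Cext => //=; have := hP ord0 ord0.
by case: (P ord0 ord0) => r i [] /=; lra.
Qed.

Definition schur : 'M[Cplx]_k := \matrix_(i, j)
  Cadd (P (lift ord0 i) (lift ord0 j))
       (Cmul (Creal (- / pivot)) (Cmul (Cconj (P ord0 (lift ord0 i))) (P ord0 (lift ord0 j)))).

Definition first_row : 'M[Cplx]_(1, k.+1) := \matrix_(p, j) P ord0 j.

Definition drop_first : 'M[Cplx]_(k, k.+1) :=
  \matrix_(p, i) cdelta (i == lift ord0 p).

Lemma posdef_pivot d : posdef P d -> d <= pivot.
Proof.
pose v (i : 'I_k.+1) := cdelta (i == ord0).
have normE : vnorm2 v = 1.
  by rewrite /vnorm2 big_ord_recl big1 => [|i _]; rewrite /v /= /Cnorm2 /=; ring.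
have formE : qform P v = P ord0 ord0.
  rewrite /qform (Csum_delta ord0) => [|i Hi].
    rewrite (Csum_delta ord0) => [|j Hj]; rewrite /v eqxx; first cring.
    by rewrite (negbTE Hj); cring.
  by rewrite big1 // => j _; rewrite /v (negbTE Hi); cring.
by move=> /(_ v); rewrite normE formE /pivot; lra.
Qed.

Lemma hermitian_schur : hermitian schur.
Proof. by move=> i j; rewrite !mxE hP; cring. Qed.

Hypothesis pivot_neq0 : pivot <> 0.

(* The first coordinate of [P (schur_lift v)] vanishes: completing the square. *)
Definition schur_lift (v : 'I_k -> Cplx) : 'I_k.+1 -> Cplx := fun i =>
  if unlift ord0 i is Some j then v j
  else Cmul (Creal (- / pivot)) (\big[Cadd/Creal 0]_(j < k) Cmul (P ord0 (lift ord0 j)) (v j)).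

Lemma qform_schur_lift v : qform P (schur_lift v) = qform schur v.
Proof.
set s := \big[Cadd/Creal 0]_(j < k) Cmul (P ord0 (lift ord0 j)) (v j).
set u := schur_lift v; set x := u ord0.
have xE : x = Cmul (Creal (- / pivot)) s by rewrite /x /u /schur_lift unlift_none.
have uS j : u (lift ord0 j) = v j by rewrite /u /schur_lift liftK.
rewrite /qform big_ord_recl big_ord_recl.
under [X in Cadd _ X = _]eq_bigr => i _ do rewrite big_ord_recl !uS.
rewrite big_split /=.
have row0 : \big[Cadd/Creal 0]_(j < k)
    Cmul (Cmul (Cconj x) (P ord0 (lift ord0 j))) (u (lift ord0 j)) = Cmul (Cconj x) s.
  by rewrite Cmul_sumr; apply: eq_bigr => j _; rewrite uS; cring.
have col0 : \big[Cadd/Creal 0]_(i < k)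
    Cmul (Cmul (Cconj (v i)) (P (lift ord0 i) ord0)) x = Cmul (Cconj s) x.
  by rewrite Cconj_sum Cmul_suml; apply: eq_bigr => i _; rewrite hP; cring.
have blockE : \big[Cadd/Creal 0]_(i < k) \big[Cadd/Creal 0]_(j < k)
    Cmul (Cmul (Cconj (v i)) (schur i j)) (v j) =
  Cadd (\big[Cadd/Creal 0]_(i < k) \big[Cadd/Creal 0]_(j < k)
          Cmul (Cmul (Cconj (v i)) (P (lift ord0 i) (lift ord0 j))) (u (lift ord0 j)))
       (Cmul (Creal (- / pivot)) (Cmul (Cconj s) s)).
  rewrite Cconj_sum Cmul_suml Cmul_sumr -big_split; apply: eq_bigr => i _.
  rewrite Cmul_sumr Cmul_sumr -big_split; apply: eq_bigr => j _; rewrite mxE uS; cring.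
rewrite -/x row0 col0 blockE pivotE xE.
move: (\big[Cadd/Creal 0]_(i < k) _) => F.
by apply: Cext => /=; field.
Qed.

Lemma posdef_schur d : 0 <= d -> posdef P d -> posdef schur d.
Proof.
move=> hd hpd v; rewrite -qform_schur_lift.
have normE : vnorm2 (schur_lift v) = Cnorm2 (schur_lift v ord0) + vnorm2 v.
  rewrite /vnorm2 big_ord_recl; congr Rplus; apply: eq_bigr => j _.
  by rewrite /schur_lift liftK.
have := hpd (schur_lift v); have := Cnorm2_ge0 (schur_lift v ord0); rewrite normE; nra.
Qed.

Lemma schur_decomp i j :
  P i j = Cadd (Cmul (Creal (/ pivot)) (gram first_row i j)) (ccongr drop_first schur i j).
Proof.
rewrite !mxE big_ord1 !mxE.
case: (unliftP ord0 i) => [i'|] ->.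
- rewrite (Csum_delta i') => [|p Hp]; last first.
    by rewrite big1 // => q _; rewrite !mxE (inj_eq (@lift_inj _ ord0)) eq_sym (negbTE Hp); cring.
  rewrite !mxE eqxx.
  case: (unliftP ord0 j) => [j'|] ->.
  + rewrite (Csum_delta j') => [|q Hq]; last first.
      by rewrite !mxE (inj_eq (@lift_inj _ ord0)) eq_sym (negbTE Hq); cring.
    by rewrite !mxE eqxx; apply: Cext => /=; field.
  + rewrite big1 => [|q _]; last by rewrite !mxE (negbTE (neq_lift _ _)); cring.
    by rewrite pivotE hP; apply: Cext => /=; field.
- rewrite big1 => [|p _]; last first.
    by rewrite big1 // => q _; rewrite !mxE (negbTE (neq_lift _ _)); cring.
  by rewrite pivotE; apply: Cext => /=; field.
Qed.

End SchurComplement.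

(** * Matrices over a complex vector space *)

HB.instance Definition _ (Z : CVS) :=
  Monoid.isComLaw.Build (vcar Z) (vzero Z) (@vadd Z) (@vadd_assoc Z) (@vadd_comm Z) (@vadd_0 Z).

Section VectorSpace.
Variable Z : CVS.
Notation vz := (vzero Z).

Lemma vaddr0 (x : Z) : vadd x vz = x.
Proof. by rewrite vadd_comm vadd_0. Qed.

Lemma vscal0 (x : Z) : vscal (Creal 0) x = vz.
Proof.
set y := vscal _ x.
have yy : y = vadd y y by rewrite /y -vscal_distr_c; congr vscal; cring.
by rewrite -(vadd_opp y) {3}yy vadd_assoc vadd_opp vadd_0.
Qed.

Lemma vscalr0 a : vscal a vz = vz.
Proof. by rewrite -(vscal0 vz) vscal_assoc; congr vscal; cring. Qed.

Lemma vscal_sumr I (r : seq I) (P : pred I) F a :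
  vscal a (\big[@vadd Z/vz]_(i <- r | P i) F i) = \big[@vadd Z/vz]_(i <- r | P i) vscal a (F i).
Proof. apply: (big_morph (vscal a)) => [x y|]; [exact: vscal_distr_v | exact: vscalr0]. Qed.

Lemma vscal_suml I (r : seq I) (P : pred I) (F : I -> Cplx) (x : Z) :
  vscal (\big[Cadd/Creal 0]_(i <- r | P i) F i) x = \big[@vadd Z/vz]_(i <- r | P i) vscal (F i) x.
Proof.
apply: (big_morph (fun a => vscal a x)) => [a b|]; [exact: vscal_distr_c | exact: vscal0].
Qed.

Lemma vsum_delta n (i0 : 'I_n) (F : 'I_n -> Z) :
  (forall i, i != i0 -> F i = vz) -> \big[@vadd Z/vz]_(i < n) F i = F i0.
Proof. by move=> F0; rewrite (bigD1 i0) //= big1 ?vaddr0. Qed.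

Lemma madd0 n (A : 'M[Z]_n) : madd A (mzero Z n n) = A.
Proof. by apply/matrixP => i j; rewrite !mxE vaddr0. Qed.

Lemma mscal_mscal n a b (A : 'M[Z]_n) : mscal a (mscal b A) = mscal (Cmul a b) A.
Proof. by apply/matrixP => i j; rewrite !mxE vscal_assoc. Qed.

Lemma mscal1 n (A : 'M[Z]_n) : mscal Defs.C1 A = A.
Proof. by apply/matrixP => i j; rewrite !mxE vscal_1. Qed.

Lemma mopp_mopp n (A : 'M[Z]_n) : mopp (mopp A) = A.
Proof.
rewrite /mopp mscal_mscal -[RHS]mscal1; congr mscal; cring.
Qed.

Lemma congr_madd n k (X : 'M[Cplx]_(n, k)) (A B : 'M[Z]_n) :
  congr_mx X (madd A B) = madd (congr_mx X A) (congr_mx X B).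
Proof.
apply/matrixP => i j; rewrite !mxE -big_split; apply: eq_bigr => p _.
by rewrite -big_split; apply: eq_bigr => q _; rewrite mxE vscal_distr_v.
Qed.

Lemma congr_mscal n k (X : 'M[Cplx]_(n, k)) a (A : 'M[Z]_n) :
  congr_mx X (mscal a A) = mscal a (congr_mx X A).
Proof.
apply/matrixP => i j; rewrite !mxE vscal_sumr; apply: eq_bigr => p _.
by rewrite vscal_sumr; apply: eq_bigr => q _; rewrite mxE !vscal_assoc; congr vscal; cring.
Qed.

Definition kron (e : Z) n (P : 'M[Cplx]_n) : 'M[Z]_n := \matrix_(i, j) vscal (P i j) e.

Lemma eI_kron e n : eI e n = kron e (cidmx n).
Proof. by apply/matrixP => i j; rewrite !mxE; case: (_ == _); rewrite ?vscal_1 ?vscal0. Qed.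

Lemma mscal_kron e n a (P : 'M[Cplx]_n) :
  mscal a (kron e P) = kron e (\matrix_(i, j) Cmul a (P i j)).
Proof. by apply/matrixP => i j; rewrite !mxE vscal_assoc. Qed.

Lemma madd_kron e n (P Q : 'M[Cplx]_n) :
  madd (kron e P) (kron e Q) = kron e (\matrix_(i, j) Cadd (P i j) (Q i j)).
Proof. by apply/matrixP => i j; rewrite !mxE vscal_distr_c. Qed.

Lemma congr_kron e n k (X : 'M[Cplx]_(n, k)) P : congr_mx X (kron e P) = kron e (ccongr X P).
Proof.
apply/matrixP => i j; rewrite !mxE vscal_suml; apply: eq_bigr => p _.
by rewrite vscal_suml; apply: eq_bigr => q _; rewrite mxE vscal_assoc.
Qed.

End VectorSpace.
Arguments vsum_delta [Z n] i0 [F].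

Section DirectSum.
Variable Z : CVS.
Notation vz := (vzero Z).

Lemma vscal_cdelta2 b b' (x : Z) :
  vscal (Cmul (Cconj (cdelta b)) (cdelta b')) x = if b && b' then x else vz.
Proof.
by case: b b' => -[] /=; [rewrite -[RHS]vscal_1 | rewrite -(vscal0 x) ..]; congr vscal; cring.
Qed.

Definition selmx N k (f : 'I_k -> 'I_N) : 'M[Cplx]_(N, k) := \matrix_(p, i) cdelta (p == f i).

Definition embmx n N (h : 'I_n -> 'I_N) : 'M[Cplx]_(n, N) := \matrix_(p, i) cdelta (i == h p).

Lemma congr_selmx N k (f : 'I_k -> 'I_N) (M : 'M[Z]_N) i j :
  congr_mx (selmx f) M i j = M (f i) (f j).
Proof.
rewrite mxE (vsum_delta (f i)) => [|p /negbTE fip]; last first.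
  by rewrite big1 // => q _; rewrite !mxE vscal_cdelta2 fip.
rewrite (vsum_delta (f j)) => [|q /negbTE fjq]; last by rewrite !mxE vscal_cdelta2 fjq andbF.
by rewrite !mxE vscal_cdelta2 !eqxx.
Qed.

Lemma congr_embmx n N (h : 'I_n -> 'I_N) (M : 'M[Z]_n) i j :
  congr_mx (embmx h) M i j =
  \big[@vadd Z/vz]_(p < n | i == h p) \big[@vadd Z/vz]_(q < n | j == h q) M p q.
Proof.
rewrite mxE [RHS]big_mkcond; apply: eq_bigr => p _.
case: ifP => hp; last by rewrite big1 // => q _; rewrite !mxE vscal_cdelta2 hp.
by rewrite [RHS]big_mkcond; apply: eq_bigr => q _; rewrite !mxE vscal_cdelta2 hp.
Qed.

Lemma congr_embmx_inj n N (h : 'I_n -> 'I_N) (M : 'M[Z]_n) i j :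
  injective h -> congr_mx (embmx h) M (h i) (h j) = M i j.
Proof.
move=> h_inj; rewrite congr_embmx (big_pred1 i) => [|p]; last by rewrite /= (inj_eq h_inj) eq_sym.
by rewrite (big_pred1 j) // => q; rewrite /= (inj_eq h_inj) eq_sym.
Qed.

Lemma congr_embmx_row0 n N (h : 'I_n -> 'I_N) (M : 'M[Z]_n) i j :
  (forall p, i != h p) -> congr_mx (embmx h) M i j = vz.
Proof. by move=> hi; rewrite congr_embmx big_pred0 // => p; apply/negbTE. Qed.

Lemma congr_embmx_col0 n N (h : 'I_n -> 'I_N) (M : 'M[Z]_n) i j :
  (forall q, j != h q) -> congr_mx (embmx h) M i j = vz.
Proof.
by move=> hj; rewrite congr_embmx big1 // => p _; rewrite big_pred0 // => q; apply/negbTE.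
Qed.

Lemma dsumE n m (A : 'M[Z]_n) (B : 'M[Z]_m) :
  dsum A B = madd (congr_mx (embmx (lshift m)) A) (congr_mx (embmx (@rshift n m)) B).
Proof.
have lr p q : lshift m p != rshift n q by rewrite eq_lrshift.
have rl p q : rshift n q != lshift m p by rewrite eq_rlshift.
apply/matrixP => i j; rewrite /dsum [RHS]mxE.
case: (split_ordP i) => i' ->; case: (split_ordP j) => j' ->.
- by rewrite block_mxEul congr_embmx_inj ?congr_embmx_row0 ?vaddr0 //; exact: lshift_inj.
- by rewrite block_mxEur mxE congr_embmx_col0 ?congr_embmx_row0 ?vaddr0.
- by rewrite block_mxEdl mxE congr_embmx_row0 ?congr_embmx_col0 ?vaddr0.
- by rewrite block_mxEdr congr_embmx_inj ?congr_embmx_row0 ?vadd_0 //; exact: rshift_inj.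
Qed.

End DirectSum.

(** * The gauge of an order unit *)

Section OrderUnitGauge.
Unset Implicit Arguments.
Variables (Z : CVS) (C : MatCone Z) (e : Z).
Set Implicit Arguments.
Hypotheses (HC : is_matrix_cone C) (He : is_order_unit C e).

Lemma cone_madd n (A B : 'M[Z]_n) : C n A -> C n B -> C n (madd A B).
Proof. by case: HC => H _; apply: H. Qed.

Lemma cone_mscal n t (A : 'M[Z]_n) : 0 <= t -> C n A -> C n (mscal (Creal t) A).
Proof. by case: HC => _ [H _]; apply: H. Qed.

Lemma cone_congr n k (X : 'M[Cplx]_(n, k)) A : C n A -> C k (congr_mx X A).
Proof. by case: HC => _ [_ H]; apply: H. Qed.

Lemma order_unit_bound n (z : 'M[Z]_n) :
  exists t, 0 < t /\ C n (madd (mscal (Creal t) (eI e n)) z).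
Proof. by case: He => _; apply. Qed.

Lemma cone_eI n : C n (eI e n).
Proof.
have [t [t_gt0]] := order_unit_bound (mzero Z n n); rewrite madd0 => Ct.
have := cone_mscal (Rlt_le _ _ (Rinv_0_lt_compat _ t_gt0)) Ct.
rewrite mscal_mscal; have -> : Cmul (Creal (/ t)) (Creal t) = Defs.C1.
  by apply: Cext => /=; field; lra.
by rewrite mscal1.
Qed.

Lemma cone_kron_posdef k (P : 'M[Cplx]_k) d :
  hermitian P -> 0 < d -> posdef P d -> C k (kron e P).
Proof.
elim: k P => [|k IH] P hP d_gt0 Pd.
  have -> : kron e P = eI e 0 by apply/matrixP => -[].
  exact: cone_eI.
have pivot_gt0 : 0 < pivot P by have := posdef_pivot Pd; lra.
have pivot_neq0 : pivot P <> 0 by lra.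
have -> : kron e P = madd (mscal (Creal (/ pivot P)) (congr_mx (first_row P) (eI e 1)))
                          (congr_mx (drop_first k) (kron e (schur P))).
  rewrite eI_kron !congr_kron ccongr_cidmx mscal_kron madd_kron; congr kron.
  by apply/matrixP => i j; rewrite {1}(schur_decomp hP pivot_neq0 i j) !mxE.
apply: cone_madd.
  by apply: cone_mscal; [exact/Rlt_le/Rinv_0_lt_compat | exact/cone_congr/cone_eI].
apply/cone_congr/IH => //; first exact: hermitian_schur.
exact: posdef_schur hP pivot_neq0 _ (Rlt_le _ _ d_gt0) Pd.
Qed.

Definition ebound n (z : 'M[Z]_n) (t : R) :=
  0 < t /\ C n (madd (mscal (Creal t) (eI e n)) (mopp z)).

Lemma nu_glb n (z : 'M[Z]_n) : is_glb (ebound z) (nu_e C e z).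
Proof.
apply: (Rinf_glb (m := 0)); last by move=> t [/Rlt_le].
have [t [t_gt0 Ct]] := order_unit_bound (mopp z); by exists t.
Qed.

Lemma nu_ge0 n (z : 'M[Z]_n) : 0 <= nu_e C e z.
Proof. by apply: (glb_ge (nu_glb z)) => t [/Rlt_le]. Qed.

Lemma ebound_up n (z : 'M[Z]_n) t t' : ebound z t -> t <= t' -> ebound z t'.
Proof.
move=> [t_gt0 Ct] le_tt'; split; first lra.
have -> : madd (mscal (Creal t') (eI e n)) (mopp z) =
          madd (mscal (Creal (t' - t)) (eI e n)) (madd (mscal (Creal t) (eI e n)) (mopp z)).
  apply/matrixP => i j; rewrite !mxE vadd_assoc -vscal_distr_c; congr (vadd (vscal _ _) _); cring.
by apply: cone_madd => //; apply: cone_mscal; [lra | exact: cone_eI].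
Qed.

Lemma nu_eq0 n (z : 'M[Z]_n) : C n (mopp z) -> nu_e C e z = 0.
Proof.
move=> Cz; apply: Rle_antisym; last exact: nu_ge0.
apply: Rle_plus_epsilon => d d_gt0; rewrite Rplus_0_l; apply: (glb_le (nu_glb z)).
by split => //; apply: cone_madd => //; apply: cone_mscal; [lra | exact: cone_eI].
Qed.

Lemma cone_nu_eq0 n (z : 'M[Z]_n) : is_archimedean C e -> nu_e C e (mopp z) = 0 -> C n z.
Proof.
move=> Harch nu0; apply: Harch => t t_gt0.
have [s [bs lt_st]] := glb_approx (nu_glb (mopp z)) t_gt0.
rewrite nu0 Rplus_0_l in lt_st.
by have [_] := ebound_up bs (Rlt_le _ _ lt_st); rewrite mopp_mopp.
Qed.

Lemma ebound_add n (x y : 'M[Z]_n) t s :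
  ebound x t -> ebound y s -> ebound (madd x y) (t + s).
Proof.
move=> [t_gt0 Cx] [s_gt0 Cy]; split; first lra.
have -> : madd (mscal (Creal (t + s)) (eI e n)) (mopp (madd x y)) =
    madd (madd (mscal (Creal t) (eI e n)) (mopp x)) (madd (mscal (Creal s) (eI e n)) (mopp y)).
  apply/matrixP => i j; rewrite !mxE (_ : Creal (t + s) = Cadd (Creal t) (Creal s)); last cring.
  rewrite vscal_distr_v vscal_distr_c.
  rewrite -!vadd_assoc; congr vadd; rewrite !vadd_assoc; congr vadd; exact: vadd_comm.
exact: cone_madd.
Qed.

Lemma ebound_scale n (x : 'M[Z]_n) t s : 0 < t -> ebound x s -> ebound (mscal (Creal t) x) (t * s).
Proof.
move=> t_gt0 [s_gt0 Cx]; split; first nra.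
have -> : madd (mscal (Creal (t * s)) (eI e n)) (mopp (mscal (Creal t) x)) =
          mscal (Creal t) (madd (mscal (Creal s) (eI e n)) (mopp x)).
  apply/matrixP => i j; rewrite !mxE vscal_distr_v !vscal_assoc.
  congr vadd; congr vscal; cring.
by apply: cone_mscal => //; lra.
Qed.

Lemma nu_add n (x y : 'M[Z]_n) : nu_e C e (madd x y) <= nu_e C e x + nu_e C e y.
Proof.
apply: glb_le_add (nu_glb x) (nu_glb y) _ => t s bxt bys.
exact/(glb_le (nu_glb _))/ebound_add.
Qed.

Lemma nu_scal n t (x : 'M[Z]_n) : 0 <= t -> nu_e C e (mscal (Creal t) x) = t * nu_e C e x.
Proof.
case=> [t_gt0|<-]; last first.
  rewrite Rmult_0_l; apply: nu_eq0.
  rewrite /mopp mscal_mscal (_ : Cmul _ _ = Creal 0); last cring.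
  rewrite (_ : mscal _ x = mscal (Creal 0) (eI e n)); last first.
    by apply/matrixP => i j; rewrite !mxE !vscal0.
  by apply: cone_mscal; [lra | exact: cone_eI].
apply: Rle_antisym.
  rewrite Rmult_comm; apply: glb_le_mul (nu_glb x) (Rlt_le _ _ t_gt0) _ => s bs.
  by rewrite Rmult_comm; apply/(glb_le (nu_glb _))/ebound_scale.
apply: (glb_ge (nu_glb _)) => u bu.
have bx : ebound x (/ t * u).
  rewrite -[x](mscal1) -(_ : Cmul (Creal (/ t)) (Creal t) = Defs.C1); last first.
    by apply: Cext => /=; field; lra.
  by rewrite -mscal_mscal; apply: ebound_scale => //; apply: Rinv_0_lt_compat.
have := glb_le (nu_glb x) bx.
have : t * (/ t * u) = u by field; lra.
nra.
Qed.

Lemma ebound_congr n k (X : 'M[Cplx]_(n, k)) (A : 'M[Z]_n) c t d :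
  opnorm_bound X c -> ebound A t -> 0 < d -> ebound (congr_mx X A) (t * (c * c) + d).
Proof.
move=> Xc [t_gt0 CA] d_gt0; split; first by apply: Rplus_le_lt_0_compat => //; nra.
set lam := t * (c * c) + d.
pose M := clincomb lam (cidmx k) (- t) (gram X).
have CM : C k (kron e M).
  apply: (cone_kron_posdef _ d_gt0); last exact: posdef_bound_sub_gram (Rlt_le _ _ t_gt0).
  by apply: hermitian_clincomb; [exact: hermitian_cidmx | exact: hermitian_gram].
have -> : madd (mscal (Creal lam) (eI e k)) (mopp (congr_mx X A)) =
          madd (congr_mx X (madd (mscal (Creal t) (eI e n)) (mopp A))) (kron e M).
  rewrite congr_madd /mopp !congr_mscal !eI_kron congr_kron ccongr_cidmx.
  apply/matrixP => i j; rewrite !mxE.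
  rewrite -[in RHS]vadd_assoc [in X in _ = vadd _ X]vadd_comm vadd_assoc.
  by rewrite !vscal_assoc -vscal_distr_c; congr vadd; congr vscal; cring.
exact/cone_madd/CM/cone_congr.
Qed.

Lemma nu_congr n k (X : 'M[Cplx]_(n, k)) (A : 'M[Z]_n) c :
  opnorm_bound X c -> nu_e C e (congr_mx X A) <= c * c * nu_e C e A.
Proof.
move=> Xc; rewrite Rmult_comm.
apply: glb_le_mul (nu_glb A) _ _ => [|t bt]; first by case: Xc => c_ge0 _; nra.
apply: Rle_plus_epsilon => d d_gt0.
exact/(glb_le (nu_glb _))/ebound_congr.
Qed.

Lemma cone_dsum n m (A : 'M[Z]_n) (B : 'M[Z]_m) : C n A -> C m B -> C (n + m)%nat (dsum A B).
Proof. by move=> CA CB; rewrite dsumE; apply: cone_madd => //; apply: cone_congr. Qed.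

Lemma ebound_dsum n m (A : 'M[Z]_n) (B : 'M[Z]_m) t s :
  ebound A t -> ebound B s -> ebound (dsum A B) (Rmax t s).
Proof.
move=> bA bB; have [M_gt0 CA] := ebound_up bA (Rmax_l t s).
have [_ CB] := ebound_up bB (Rmax_r t s).
split=> //; set M := Rmax t s in CA CB *.
have -> : madd (mscal (Creal M) (eI e (n + m))) (mopp (dsum A B)) =
          dsum (madd (mscal (Creal M) (eI e n)) (mopp A)) (madd (mscal (Creal M) (eI e m)) (mopp B)).
  apply/matrixP => i j; rewrite /dsum [LHS]mxE [mopp _ _ _]mxE.
  case: (split_ordP i) => i' ->; case: (split_ordP j) => j' ->.
  - by rewrite !block_mxEul !mxE eq_lshift.
  - by rewrite !block_mxEur !mxE eq_lrshift vscalr0 vscalr0 vaddr0.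
  - by rewrite !block_mxEdl !mxE eq_rlshift vscalr0 vscalr0 vaddr0.
  - by rewrite !block_mxEdr !mxE eq_rshift.
exact: cone_dsum.
Qed.

Lemma ebound_dsuml n m (A : 'M[Z]_n) (B : 'M[Z]_m) u :
  ebound (dsum A B) u -> ebound A u.
Proof.
move=> [u_gt0 Cu]; split=> //.
have -> : madd (mscal (Creal u) (eI e n)) (mopp A) =
    congr_mx (selmx (lshift m)) (madd (mscal (Creal u) (eI e (n + m))) (mopp (dsum A B))).
  apply/matrixP => i j; rewrite congr_selmx /dsum [RHS]mxE [mopp _ _ _]mxE block_mxEul.
  by rewrite !mxE eq_lshift.
exact: cone_congr.
Qed.

Lemma ebound_dsumr n m (A : 'M[Z]_n) (B : 'M[Z]_m) u :
  ebound (dsum A B) u -> ebound B u.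
Proof.
move=> [u_gt0 Cu]; split=> //.
have -> : madd (mscal (Creal u) (eI e m)) (mopp B) =
    congr_mx (selmx (@rshift n m)) (madd (mscal (Creal u) (eI e (n + m))) (mopp (dsum A B))).
  apply/matrixP => i j; rewrite congr_selmx /dsum [RHS]mxE [mopp _ _ _]mxE block_mxEdr.
  by rewrite !mxE eq_rshift.
exact: cone_congr.
Qed.

Lemma nu_dsum n m (A : 'M[Z]_n) (B : 'M[Z]_m) :
  nu_e C e (dsum A B) = Rmax (nu_e C e A) (nu_e C e B).
Proof.
apply: Rle_antisym.
  apply: glb_le_max (nu_glb A) (nu_glb B) _ => t s bA bB.
  exact/(glb_le (nu_glb _))/ebound_dsum.
apply: (glb_ge (nu_glb _)) => u bu.
by apply: Rmax_lub; apply: (glb_le (nu_glb _));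
  [exact: ebound_dsuml bu | exact: ebound_dsumr bu].
Qed.

End OrderUnitGauge.

Theorem lemma4p5 (Z : CVS) (C : MatCone Z) (e : Z) :
  accretive_AMOU_space C e ->
  is_matrix_gauge (nu_e C e) /\
  (forall n (z : 'M[Z]_n), C n z <-> nu_e C e (mopp z) = 0).
Proof.
move=> [HC [_ [He Harch]]]; split.
  split; first exact: nu_ge0.
  split; first exact: nu_add.
  split; first exact: nu_scal.
  split; first exact: nu_congr.
  exact: nu_dsum.
move=> n z; split; last exact: cone_nu_eq0.
by move=> Cz; apply: nu_eq0 => //; rewrite mopp_mopp.
Qed.
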